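(* Let $i\geq0$ and let $\tau$ be an SSRCT of shape $\alpha$ such that $\widetilde\alpha$ has an addable node in column $i+1$. Then $\Phi_{i+1}(\tau)$ has shape $\mathfrak{v}_{[i]}(\alpha)$.
   Context: Compositions are drawn as reverse composition diagrams (row $r$ from the top has $\alpha_r$ left-justified boxes); $\widetilde\alpha$ is the sorted partition. An SSRCT of shape $\alpha$: filling by positive integers with rows weakly decreasing left to right, first column strictly increasing top to bottom, and for rows $r<s$ and column $c$ with $(s,c+1)\in\alpha$, if $(r,c)\in\alpha$ and $\tau(r,c)\geq\tau(s,c+1)$ then $(r,c+1)\in\alpha$ and $\tau(r,c+1)>\tau(s,c+1)$. $\mathfrak{d}_j(\alpha)$ subtracts $1$ from the rightmost part equal to $j$ (omitting a resulting $0$); $\mathfrak{v}_{[i]}=\mathfrak{d}_1\mathfrak{d}_2\cdots\mathfrak{d}_i$ with $\mathfrak{d}_i$ applied first, and $\mathfrak{v}_{[0]}$ the identity. $\phi_{j+1}$ ($j\geq1$), for an SSRCT $\tau$ of shape $\alpha$ with a part equal to $j$ ($\tau(r,c)=0$ outside $\alpha$): $r_1$ is the largest index with $\alpha_{r_1}=j$; for $t\geq2$, $r_t$ is the largest $r<r_{t-1}$ with $\tau(r,j)>\tau(r_{t-1},j)\geq\tau(r,j+1)$, ending at $r_k$; $\phi_{j+1}(\tau)$ places, for $t=k,\ldots,2$, the original entry $\tau(r_{t-1},j)$ into box $(r_t,j)$ and deletes box $(r_1,j)$ (and its row if empty). $\Phi_1(\tau)=\tau$ and $\Phi_{i+1}(\tau)=\phi_2(\phi_3(\cdots\phi_{i+1}(\tau)\cdots))$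 for $i\geq1$. *)

From mathcomp Require Import all_boot.
Set Implicit Arguments. Unset Strict Implicit. Unset Printing Implicit Defensive.

(* Compositions: seq nat with positive parts; alpha_r = nth 0 alpha (r-1).
   Rows and columns are 1-indexed as in the paper.
   A filling is a seq of rows (row r = list of entries from left to right). *)

Definition composition (a : seq nat) : bool := all (fun x => 0 < x) a.

Definition sorted_part (a : seq nat) : seq nat := sort geq a.

Definition inbox (a : seq nat) (r c : nat) : bool :=
  (0 < r <= size a) && (0 < c <= nth 0 a r.-1).

(* addable node in column c of a partition lam: a box (r,c) not in lam
   whose addition gives a partition *)
Definition addable (lam : seq nat) (c : nat) : Prop :=
  exists r, [/\ 0 < r <= (size lam).+1, nth 0 lam r.-1 = c.-1
             & (r = 1 \/ c <= nth 0 lam r.-2)].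

(* entry tau(r,c), 0 outside *)
Definition entry (T : seq (seq nat)) (r c : nat) : nat :=
  if (r == 0) || (c == 0) then 0 else nth 0 (nth [::] T r.-1) c.-1.

Definition tab_shape (T : seq (seq nat)) : seq nat := map size T.

Definition is_SSRCT (T : seq (seq nat)) (a : seq nat) : Prop :=
  [/\ tab_shape T = a, composition a,
      (forall r c, inbox a r c -> 0 < entry T r c),
      (forall r c, 0 < c -> inbox a r c.+1 -> entry T r c.+1 <= entry T r c)
    & (forall r, 0 < r -> r < size a -> entry T r 1 < entry T r.+1 1)] /\
    (forall r s c, 0 < r -> r < s -> 0 < c -> inbox a s c.+1 ->
         inbox a r c -> entry T s c.+1 <= entry T r c ->
         inbox a r c.+1 /\ entry T s c.+1 < entry T r c.+1).

(* 1-indexed position of the rightmost part equal to j (assumes j \in a) *)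
Definition rightmost (j : nat) (a : seq nat) : nat := size a - index j (rev a).

(* d_j : subtract 1 from the rightmost part equal to j, omitting a 0;
   (identity if there is no such part: never used in that case) *)
Definition dj (j : nat) (a : seq nat) : seq nat :=
  if j \in a then
    let k := (rightmost j a).-1 in
    if j == 1 then take k a ++ drop k.+1 a else set_nth 0 a k j.-1
  else a.

(* v_[i] = d_1 d_2 ... d_i, d_i applied first *)
Fixpoint vv (i : nat) (a : seq nat) : seq nat :=
  match i with 0 => a | i'.+1 => vv i' (dj i a) end.

(* phi_{j+1}: the next row r_t from r_{t-1} *)
Definition next_row (T : seq (seq nat)) (j r' : nat) : option nat :=
  let cands := [seq r <- iota 1 r'.-1 |
                 (entry T r' j < entry T r j) && (entry T r (j.+1) <= entry T r' j)] in
  if cands is [::] then None else Some (last 0 cands).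

Fixpoint chain (T : seq (seq nat)) (j : nat) (fuel r' : nat) : seq nat :=
  match fuel with
  | 0 => [::]
  | f.+1 => match next_row T j r' with
            | Some r => r :: chain T j f r
            | None => [::]
            end
  end.

Definition phi_rows (T : seq (seq nat)) (j : nat) : seq nat :=
  let r1 := rightmost j (tab_shape T) in r1 :: chain T j (size T) r1.

Definition set_entry (T : seq (seq nat)) (r c v : nat) : seq (seq nat) :=
  set_nth [::] T r.-1 (set_nth 0 (nth [::] T r.-1) c.-1 v).

(* delete box (r,c) where c is the last box of row r; delete the row if empty *)
Definition del_box (T : seq (seq nat)) (r c : nat) : seq (seq nat) :=
  if c == 1 then take r.-1 T ++ drop r T
  else set_nth [::] T r.-1 (take c.-1 (nth [::] T r.-1)).

(* phi_{j+1}(T); None when the tab_shape has no part equal to j (undefined) *)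
Definition phi (j : nat) (T : seq (seq nat)) : option (seq (seq nat)) :=
  if (j == 0) || (j \notin tab_shape T) then None else
  let rs := phi_rows T j in
  let moved := foldl (fun U p => set_entry U p.1 j (entry T p.2 j))
                     T (zip (behead rs) rs) in
  Some (del_box moved (head 0 rs) j).

(* Phi i T = Phi_{i+1}(T) = phi_2 (phi_3 ( ... phi_{i+1} T)); Phi_1 = id *)
Fixpoint Phi (i : nat) (T : seq (seq nat)) : option (seq (seq nat)) :=
  match i with
  | 0 => Some T
  | i'.+1 => obind (Phi i') (phi i T)
  end.

From mathcomp Require Import all_boot.

(* phi_{j+1} only rewrites entries of column j in rows r_2, ..., r_k, which
   all carry a positive entry there and hence a box, and then removes the
   last box of the lowest row of length j; so it turns the shape alpha into
   d_j(alpha).  An addable node in column i+1 of the sorted partition means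
   that alpha has a part equal to i, and d_{j+1} turns the rightmost part
   j+1 into j, so each phi_{j+1} in Phi_{i+1} meets a part equal to j.
   Only the shape of tau matters. *)

Lemma map_set_nth (A B : Type) (f : A -> B) x0 (s : seq A) n y :
  map f (set_nth x0 s n y) = set_nth (f x0) (map f s) n (f y).
Proof.
elim: s n => [|x s IH] [|n] //=; last by rewrite IH.
by elim: n => [|n IHn] //=; rewrite IHn.
Qed.

Lemma set_nth_nth (A : Type) x0 (s : seq A) n :
  n < size s -> set_nth x0 s n (nth x0 s n) = s.
Proof. by elim: s n => [|x s IH] [|n] //= Hn; rewrite IH. Qed.

Lemma nth_tab_shape T r : nth 0 (tab_shape T) r = size (nth [::] T r).
Proof. by elim: T r => [|row T IH] [|r] //=. Qed.

Lemma inbox_entry_gt0 T r c : 0 < entry T r c -> inbox (tab_shape T) r c.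
Proof.
rewrite /entry /inbox nth_tab_shape size_map.
case: r => [|r] //; case: c => [|c] //= Hpos.
have Hc : c < size (nth [::] T r).
  by rewrite ltnNge; apply: contraTN Hpos => Hs; rewrite nth_default.
have Hr : r < size T.
  by rewrite ltnNge; apply: contraTN Hc => Hs; rewrite nth_default.
by rewrite Hr Hc.
Qed.

Lemma inbox_chain T j f r' : all (fun r => inbox (tab_shape T) r j) (chain T j f r').
Proof.
elim: f r' => [|f IH] r' //=; rewrite /next_row.
set cands := filter _ _; case Ec: cands => [|r rs] //=.
rewrite IH andbT; apply: inbox_entry_gt0.
have : last r rs \in cands by rewrite Ec mem_last.
by rewrite mem_filter => /andP[/andP[lt_r' _] _]; apply: leq_ltn_trans lt_r'.
Qed.

Lemma tab_shape_set_entry T r c v :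
  inbox (tab_shape T) r c -> tab_shape (set_entry T r c v) = tab_shape T.
Proof.
rewrite /inbox size_map nth_tab_shape => /andP[/andP[r_gt0 Hr] /andP[c_gt0 Hc]].
rewrite /set_entry /tab_shape map_set_nth size_set_nth prednK // (maxn_idPr Hc).
by rewrite -nth_tab_shape set_nth_nth // size_map prednK.
Qed.

Lemma tab_shape_foldl_set_entry T j (g : nat * nat -> nat) (ps : seq (nat * nat)) :
  all (fun p => inbox (tab_shape T) p.1 j) ps ->
  tab_shape (foldl (fun U p => set_entry U p.1 j (g p)) T ps) = tab_shape T.
Proof.
elim: ps T => [|p ps IH] T //= /andP[Hp Hps].
by rewrite IH tab_shape_set_entry // tab_shape_set_entry.
Qed.

Lemma tab_shape_del_box T r c : size (nth [::] T r.-1) = c ->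
  tab_shape (del_box T r c) =
    if c == 1 then take r.-1 (tab_shape T) ++ drop r (tab_shape T)
    else set_nth 0 (tab_shape T) r.-1 c.-1.
Proof.
move=> Hc; rewrite /del_box /tab_shape; case: (c == 1).
  by rewrite map_cat map_take map_drop.
by rewrite map_set_nth /= size_take Hc ltn_predL; case: c Hc.
Qed.

Lemma rightmost_gt0 j s : j \in s -> 0 < rightmost j s.
Proof. by rewrite /rightmost subn_gt0 -size_rev index_mem mem_rev. Qed.

Lemma nth_rightmost j s : j \in s -> nth 0 s (rightmost j s).-1 = j.
Proof.
move=> Hj; have Hi : index j (rev s) < size s by rewrite -size_rev index_mem mem_rev.
have := nth_rev 0 Hi; rewrite nth_index ?mem_rev // => Ej.
by rewrite /rightmost -subnS -Ej.
Qed.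

Lemma tab_shape_phi j T : 0 < j -> j \in tab_shape T ->
  exists T', phi j T = Some T' /\ tab_shape T' = dj j (tab_shape T).
Proof.
move=> j_gt0 Hj; rewrite /phi Hj orbF gtn_eqF //; eexists; split; first by [].
set moved := foldl _ _ _.
have Hmoved : tab_shape moved = tab_shape T.
  apply: tab_shape_foldl_set_entry; rewrite /phi_rows /=.
  set rs := chain _ _ _ _; have := inbox_chain T j (size T) (rightmost j (tab_shape T)).
  by rewrite -/rs -{1}(@unzip1_zip _ _ rs (rightmost j (tab_shape T) :: rs)) ?all_map.
have Hrow : size (nth [::] moved (rightmost j (tab_shape T)).-1) = j.
  by rewrite -nth_tab_shape Hmoved nth_rightmost.
by rewrite tab_shape_del_box // Hmoved /dj Hj /= prednK ?rightmost_gt0.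
Qed.

Lemma mem_dj j a : 0 < j -> j.+1 \in a -> j \in dj j.+1 a.
Proof.
move=> j_gt0 Hj; rewrite /dj Hj eqSS gtn_eqF //=.
apply/(nthP 0); exists (rightmost j.+1 a).-1; last by rewrite nth_set_nth /= eqxx.
by rewrite size_set_nth leq_max ltnSn.
Qed.

Lemma tab_shape_Phi i T : (0 < i -> i \in tab_shape T) ->
  exists T', Phi i T = Some T' /\ tab_shape T' = vv i (tab_shape T).
Proof.
elim: i T => [|i IH] T Hi; first by exists T.
have [T1 [E1 S1]] := @tab_shape_phi i.+1 T isT (Hi isT).
rewrite /= E1 /= -S1; apply: IH => i_gt0.
by rewrite S1 mem_dj ?Hi.
Qed.

Lemma addable_mem lam c : addable lam c.+1 -> 0 < c -> c \in lam.
Proof.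
case=> r [_ /= Hr _] c_gt0; rewrite -Hr mem_nth // ltnNge.
by apply: contraTN c_gt0 => Hs; rewrite -Hr nth_default.
Qed.

Theorem corollary6p23 (i : nat) (a : seq nat) (T : seq (seq nat)) :
  is_SSRCT T a -> addable (sorted_part a) i.+1 ->
  exists T', Phi i T = Some T' /\ tab_shape T' = vv i a.
Proof.
move=> [[<- _ _ _ _] _] Hadd; apply: tab_shape_Phi => i_gt0.
by rewrite -(mem_sort geq) addable_mem.
Qed.
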